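(* Let $M\in L^1(0,1)$ with $M\ge0$ a.e., and let $$Q=\Big\{u\in\mathcal C^1([0,1]):\ |u'(t)-u'(s)|\le\int_s^tM(r)\,dr\ \text{whenever }0\le s\le t\le1\Big\}.$$ Then $Q$ is closed in $\mathcal C([0,1])$ with the maximum norm topology. Moreover, if $u_n\in Q$ for all $n\in\mathbb N$ and $u_n\to u$ uniformly on $[0,1]$, then some subsequence $\{u_{n_k}\}$ converges to $u$ in the $\mathcal C^1$ norm. *)

From HB Require Import structures.
From mathcomp Require Import all_boot all_order all_algebra.
From mathcomp Require Import all_classical all_reals all_analysis.
Set Implicit Arguments. Unset Strict Implicit. Unset Printing Implicit Defensive.
Import Order.TTheory GRing.Theory Num.Theory.
Import numFieldNormedType.Exports.
Local Open Scope classical_set_scope.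
Local Open Scope ring_scope.

Definition C1on01 {R : realType} (u du : R -> R) : Prop :=
  (forall t, t \in `[0, 1] ->
     (fun h => h^-1 * (u (t + h) - u t))
       @ within [set h | t + h \in `[0, 1]] 0^' --> du t)
  /\ {within `[0, 1], continuous du}.

Definition inQ {R : realType} (M : R -> R) (u du : R -> R) : Prop :=
  C1on01 u du /\
  forall s t, 0 <= s -> s <= t -> t <= 1 ->
    ((`|du t - du s|)%:E <=
       \int[@lebesgue_measure R]_(r in `[s, t]) (M r)%:E)%E.

Definition unif_cvg01 {R : realType} (f : nat -> R -> R) (g : R -> R) : Prop :=
  forall e : R, 0 < e ->
    exists N : nat, forall n, (N <= n)%N ->
      forall t, t \in `[0, 1] -> `|f n t - g t| < e.

From HB Require Import structures.
From mathcomp Require Import all_boot all_order all_algebra.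
From mathcomp Require Import all_classical all_reals all_analysis.
From mathcomp Require Import ring lra.
Import Order.TTheory GRing.Theory Num.Theory.
Import numFieldNormedType.Exports.
Set Implicit Arguments. Unset Strict Implicit. Unset Printing Implicit Defensive.
Local Open Scope classical_set_scope.
Local Open Scope ring_scope.

(** By absolute continuity of the integral, the derivatives of all members of
   Q share one modulus of continuity on [0,1].  The mean value theorem then
   puts a difference quotient of u_n over a step of fixed length within any
   prescribed distance of u_n' at the base point, uniformly in n; since u_n
   converges uniformly, (u_n') is uniformly Cauchy.  So the whole sequence
   converges in C^1, and the limit derivative inherits the defining
   inequality of Q. *)

Section C1_on_unit_interval.
Variable R : realType.
Implicit Types (f u du : R -> R) (s t x y h d e : R).

Lemma near_within_dnbhs0P (S P : set R) :
  (\forall h \near within S 0^', P h) <->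
  exists2 d, 0 < d & forall h, `|h| < d -> h != 0 -> S h -> P h.
Proof.
split.
- move=> /nbhs_ballP [d d0 Hd]; exists d => // h hd h0 Sh.
  by apply: Hd => //; rewrite /ball /= sub0r normrN.
- move=> [d d0 Hd]; apply/nbhs_ballP; exists d => // h /=.
  by rewrite /ball /= sub0r normrN => hd h0 Sh; exact: Hd.
Qed.

Lemma within01_continuous_ball f :
  (forall x, x \in `[0, 1] -> forall e, 0 < e ->
     exists2 d, 0 < d & forall y, y \in `[0, 1] -> `|x - y| < d -> `|f x - f y| < e) ->
  {within `[0, 1], continuous f}.
Proof.
move=> Hf; apply/subspace_continuousP => x x01; apply/cvgrPdist_lt => e e0.
have [d d0 Hd] := Hf x (ltac:(by rewrite inE)) e e0.
by apply/nbhs_ballP; exists d => // y xy y01; apply: Hd; rewrite ?inE.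
Qed.

Definition osc01_le f d e := forall s t, s \in `[0, 1] -> t \in `[0, 1] ->
  `|t - s| < d -> `|f t - f s| <= e.

Lemma osc01_continuous f :
  (forall e, 0 < e -> exists2 d, 0 < d & osc01_le f d e) ->
  {within `[0, 1], continuous f}.
Proof.
move=> Hf; apply: within01_continuous_ball => x x01 e e0.
have [d d0 Hd] := Hf (e / 2) (divr_gt0 e0 (ltr0Sn _ 1)).
exists d => // y y01 xy; apply: le_lt_trans (Hd y x y01 x01 xy) _; lra.
Qed.

Lemma C1on01_diff_quotient_near u du t : C1on01 u du -> t \in `[0, 1] ->
  forall e, 0 < e -> exists2 d, 0 < d & forall h, `|h| < d -> h != 0 ->
    t + h \in `[0, 1] -> `|h^-1 * (u (t + h) - u t) - du t| < e.
Proof.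
case=> Hd _ t01 e e0.
have /cvgrPdist_lt/(_ e e0)/near_within_dnbhs0P [d d0 H] := Hd t t01.
by exists d => // h hd h0 th; rewrite distrC; exact: H.
Qed.

Lemma C1on01_continuous u du : C1on01 u du -> {within `[0, 1], continuous u}.
Proof.
move=> Hu; apply: within01_continuous_ball => x x01 e e0.
have [d d0 Hd] := C1on01_diff_quotient_near Hu x01 ltr01.
have k0 : 0 < `|du x| + 1 by rewrite ltr_wpDl.
exists (Num.min d (e / (`|du x| + 1))); first by rewrite lt_min d0 divr_gt0.
move=> y y01; rewrite lt_min distrC => /andP[yd ye].
have [->|yx] := eqVneq y x; first by rewrite subrr normr0.
have hx : y - x != 0 by rewrite subr_eq0.
have := Hd (y - x) yd hx; rewrite addrCA subrr addr0 => /(_ y01) Hq.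
have q_lt : `|(y - x)^-1 * (u y - u x)| < `|du x| + 1.
  rewrite -[X in `|X|](subrK (du x)); apply: le_lt_trans (ler_normD _ _) _.
  by rewrite addrC ltrD2l.
have -> : u x - u y = - ((y - x) * ((y - x)^-1 * (u y - u x))).
  by rewrite mulrA divff // mul1r opprB.
rewrite normrN normrM.
by have := ltr_pM (normr_ge0 _) (normr_ge0 _) ye q_lt; rewrite divfK // gt_eqF.
Qed.

Lemma C1on01_is_derive u du x : C1on01 u du -> x \in `]0, 1[ ->
  is_derive x 1 u (du x).
Proof.
move=> Hu x01; have /andP[x0 x1] : (0 < x) && (x < 1) by rewrite in_itv in x01.
have lim : (fun h : R => h^-1 *: ((u \o shift x) (h *: 1) - u x)) @ 0^' --> du x.
  apply/cvgrPdist_lt => e e0.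
  rewrite -(withinET (F := 0^')); apply/near_within_dnbhs0P.
  have [d d0 H] := C1on01_diff_quotient_near Hu (subset_itv_oo_cc x01) e0.
  exists (Num.min d (Num.min x (1 - x))); first by rewrite !lt_min d0 x0 subr_gt0 x1.
  move=> h; rewrite !lt_min => /and3P[hd hx h1x] h0 _.
  rewrite distrC /= /shift [h%:A]mulr1 (addrC h); apply: H => //.
  move: hx h1x; rewrite !ltr_norml in_itv /= => /andP[? ?] /andP[? ?].
  apply/andP; split; lra.
by apply: DeriveDef; [exact: cvgP lim | exact: cvg_lim lim].
Qed.

Lemma C1on01_MVT u du s t : C1on01 u du -> 0 <= s -> s < t -> t <= 1 ->
  exists2 c, c \in `]s, t[ & u t - u s = du c * (t - s).
Proof.
move=> Hu s0 st t1; apply: MVT => //.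
  move=> c; rewrite in_itv /= => /andP[sc ct]; apply: C1on01_is_derive Hu _.
  by rewrite in_itv /=; apply/andP; split; lra.
apply: continuous_subspaceW (C1on01_continuous Hu) => c.
by rewrite /= !in_itv /= => /andP[sc ct]; apply/andP; split; lra.
Qed.

Lemma C1on01_diff_quotient_le u du t h d e : C1on01 u du -> osc01_le du d e ->
  t \in `[0, 1] -> t + h \in `[0, 1] -> h != 0 -> `|h| < d ->
  `|h^-1 * (u (t + h) - u t) - du t| <= e.
Proof.
move=> Hu Hosc t01 th h0 hd.
suff [c [c01 ct ->]] : exists c,
    [/\ c \in `[0, 1], `|c - t| < d & h^-1 * (u (t + h) - u t) = du c].
  exact: Hosc t c t01 c01 ct.
move: (t01) (th) hd; rewrite !in_itv /= ltr_norml.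
move=> /andP[t0 t1] /andP[th0 th1] /andP[hd1 hd2].
have [hneg|hpos] : h < 0 \/ 0 < h by move: h0; rewrite neq_lt => /orP.
- have [|c] := C1on01_MVT Hu th0 _ t1; first lra.
  rewrite in_itv /= => /andP[? ?] Ec; exists c; split.
  + by rewrite in_itv /=; apply/andP; split; lra.
  + by rewrite ltr_norml; apply/andP; split; lra.
  + have -> : u (t + h) - u t = - (u t - u (t + h)) by rewrite opprB.
    by rewrite Ec; field.
- have [|c] := C1on01_MVT Hu t0 _ th1; first lra.
  rewrite in_itv /= => /andP[? ?] Ec; exists c; split.
  + by rewrite in_itv /=; apply/andP; split; lra.
  + by rewrite ltr_norml; apply/andP; split; lra.
  + by rewrite Ec; field.
Qed.

Lemma diff_quotient_dist_lt f g t h eta : h != 0 ->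
  `|f (t + h) - g (t + h)| < eta -> `|f t - g t| < eta ->
  `|h^-1 * (f (t + h) - f t) - h^-1 * (g (t + h) - g t)| < 2 * eta / `|h|.
Proof.
move=> h0 Hth Ht; have hpos : 0 < `|h| by rewrite normr_gt0.
rewrite -mulrBr normrM normfV mulrC ltr_pM2r ?invr_gt0 //.
move: Hth Ht; rewrite !ltr_norml => /andP[? ?] /andP[? ?].
by apply/andP; split; lra.
Qed.

Lemma in01_shift t h : t \in `[0, 1] -> 0 < h -> h <= 1 / 2 ->
  exists2 k, `|k| = h & t + k \in `[0, 1].
Proof.
rewrite in_itv /= => /andP[t0 t1] h0 h2.
have [tl|tr] := leP t (1 / 2).
- exists h; first by rewrite gtr0_norm.
  by rewrite in_itv /=; apply/andP; split; lra.
- exists (- h); first by rewrite normrN gtr0_norm.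
  by rewrite in_itv /=; apply/andP; split; lra.
Qed.

Lemma unif_cvg01_dist_le (f : nat -> R -> R) g s t (I : \bar R) :
  unif_cvg01 f g -> s \in `[0, 1] -> t \in `[0, 1] ->
  (forall n, (`|f n t - f n s|%:E <= I)%E) -> (`|g t - g s|%:E <= I)%E.
Proof.
move=> fg s01 t01; case: I => [r Hf|_|/(_ 0%N)//]; last by rewrite leey.
rewrite lee_fin; apply/ler_addgt0Pr => eta eta0.
have [N HN] := fg (eta / 2) (divr_gt0 eta0 (ltr0Sn _ 1)).
have := Hf N; rewrite lee_fin.
have := HN N (leqnn N) t t01; have := HN N (leqnn N) s s01.
rewrite !ltr_norml !ler_norml => /andP[? ?] /andP[? ?] /andP[? ?].
by apply/andP; split; lra.
Qed.

Lemma unif_cauchy01_cvg (f : nat -> R -> R) :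
  (forall e, 0 < e -> exists N, forall n m, (N <= n)%N -> (N <= m)%N ->
     forall t, t \in `[0, 1] -> `|f n t - f m t| < e) ->
  exists g, unif_cvg01 f g.
Proof.
move=> Hf; pose g t := lim (f n t @[n --> \oo]); exists g.
have fg t : t \in `[0, 1] -> f n t @[n --> \oo] --> g t.
  move=> t01; apply/cauchy_cvgP/cauchy_exP => e e0.
  have [N HN] := Hf e e0; exists (f N t), N => // n /= Nn.
  exact: HN.
move=> e e0; have e2 : 0 < e / 2 by rewrite divr_gt0.
have [N HN] := Hf _ e2; exists N => n Nn t t01.
have /cvgrPdist_lt/(_ _ e2) [N' _ HN'] := fg t t01.
have := HN n (maxn N N') Nn (leq_maxl _ _) t t01.
have := HN' (maxn N N') (leq_maxr _ _).
rewrite !ltr_norml => /andP[? ?] /andP[? ?].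
by apply/andP; split; lra.
Qed.

Section uniform_limit.
Variables (u du : nat -> R -> R) (v : R -> R).
Hypothesis u_C1 : forall n, C1on01 (u n) (du n).
Hypothesis u_cvg : unif_cvg01 u v.
Hypothesis du_equi : forall e, 0 < e ->
  exists2 d, 0 < d & forall n, osc01_le (du n) d e.

Lemma derivative_unif_cauchy e : 0 < e ->
  exists N, forall n m, (N <= n)%N -> (N <= m)%N ->
    forall t, t \in `[0, 1] -> `|du n t - du m t| < e.
Proof.
move=> e0; have [d d0 Hd] := du_equi (divr_gt0 e0 (ltr0Sn _ 3)).
(* h < d for the common modulus, h <= 1/2 so that a step of length h fits in [0,1] *)
pose h := Num.min (d / 2) (1 / 2).
have h0 : 0 < h by rewrite lt_min !divr_gt0.
have hd : h < d by rewrite gt_min ltr_pdivrMr // ltr_pMr // ltr1n.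
have h2 : h <= 1 / 2 by rewrite ge_min lexx orbT.
have [N HN] := u_cvg (divr_gt0 (mulr_gt0 e0 h0) (ltr0Sn _ 7)).
exists N => n m Nn Nm t t01.
have [k kh tk] := in01_shift t01 h0 h2.
have k0 : k != 0 by rewrite -normr_gt0 kh.
have kd : `|k| < d by rewrite kh.
have Qn := C1on01_diff_quotient_le (u_C1 n) (Hd n) t01 tk k0 kd.
have Qm := C1on01_diff_quotient_le (u_C1 m) (Hd m) t01 tk k0 kd.
have unm x : x \in `[0, 1] -> `|u n x - u m x| < e * h / 4.
  move=> x01; have := HN n Nn x x01; have := HN m Nm x x01.
  by rewrite !ltr_norml => /andP[? ?] /andP[? ?]; apply/andP; split; lra.
have := diff_quotient_dist_lt k0 (unm _ tk) (unm _ t01).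
rewrite kh (_ : 2 * (e * h / 4) / h = e / 2); last by field; rewrite gt_eqF.
move: Qn Qm; set Qn := k^-1 * _; set Qm := k^-1 * _.
rewrite !ler_norml !ltr_norml => /andP[? ?] /andP[? ?] /andP[? ?].
by apply/andP; split; lra.
Qed.

Variable w : R -> R.
Hypothesis du_cvg : unif_cvg01 du w.

Lemma unif_lim_diff_quotient t : t \in `[0, 1] ->
  (fun h => h^-1 * (v (t + h) - v t)) @ within [set h | t + h \in `[0, 1]] 0^' --> w t.
Proof.
move=> t01; apply/cvgrPdist_lt => e e0; apply/near_within_dnbhs0P.
have [d d0 Hd] := du_equi (divr_gt0 e0 (ltr0Sn _ 1)).
exists d => // h hd h0 th.
have hpos : 0 < `|h| by rewrite normr_gt0.
have [N1 HN1] := u_cvg (divr_gt0 (mulr_gt0 e0 hpos) (ltr0Sn _ 7)).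
have [N2 HN2] := du_cvg (divr_gt0 e0 (ltr0Sn _ 7)).
pose n := maxn N1 N2.
have Qn := C1on01_diff_quotient_le (u_C1 n) (Hd n) t01 th h0 hd.
have := diff_quotient_dist_lt h0 (HN1 n (leq_maxl _ _) _ th) (HN1 n (leq_maxl _ _) _ t01).
rewrite (_ : 2 * (e * `|h| / 8) / `|h| = e / 4); last by field; rewrite gt_eqF.
have := HN2 n (leq_maxr _ _) t t01.
move: Qn; set Qv := h^-1 * (v _ - _); set Qn := h^-1 * _.
rewrite !ler_norml !ltr_norml => /andP[? ?] /andP[? ?] /andP[? ?].
by apply/andP; split; lra.
Qed.

Lemma C1on01_unif_lim : C1on01 v w.
Proof.
split; first exact: unif_lim_diff_quotient.
apply: osc01_continuous => e e0; have [d d0 Hd] := du_equi e0.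
exists d => // s t s01 t01 ts; rewrite -lee_fin.
apply: (unif_cvg01_dist_le du_cvg s01 t01) => n.
by rewrite lee_fin; apply: Hd.
Qed.

End uniform_limit.

Local Notation mu := (@lebesgue_measure R).

Lemma integral_short_itv_le (M : R -> R) :
  mu.-integrable `]0, 1[ (EFin \o M) ->
  forall e, 0 < e -> exists2 d, 0 < d & forall s t, 0 <= s -> s <= t -> t <= 1 ->
    t - s < d -> (\int[mu]_(r in `[s, t]) (M r)%:E <= e%:E)%E.
Proof.
move=> hM e e0; pose f := M \_ `]0, 1[.
have intf : mu.-integrable setT (EFin \o f).
  by rewrite /f -restrict_EFin -integrable_mkcond.
have [d [d0 Hd]] := integral_normr_continuous intf e0.
exists d => // s t s0 st t1 tsd.
have sub : `]s, t[ `<=` `]0, 1[.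
  by move=> c; rewrite /= !in_itv /= => /andP[? ?]; apply/andP; split; lra.
have mM := measurable_funS (measurable_itv _) sub (measurable_int _ hM).
have intft : mu.-integrable `]s, t[ (EFin \o f) by exact: integrableS intf.
have mst : (mu `]s, t[%classic < d%:E)%E.
  by rewrite lebesgue_measure_itv /=; case: ifP => _; rewrite ?lte_fin // -EFinB lte_fin.
have Mf : (\int[mu]_(x in `]s, t[) `|(EFin \o M) x|)%E =
          (\int[mu]_(x in `]s, t[) (`|f x|)%:E)%E.
  apply: eq_integral => x; rewrite inE => xst /=.
  by rewrite /f patchE ifT // inE; apply: sub.
have fin : (\int[mu]_(x in `]s, t[) (`|f x|)%:E)%E \is a fin_num.
  rewrite ge0_fin_numE; last by apply: integral_ge0 => x _; rewrite lee_fin.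
  by case/integrableP: intft.
rewrite (integral_itv_bndoo _ _ mM); apply: le_trans (lee_abs _) _.
apply: le_trans (le_abse_integral mu (measurable_itv _) mM) _.
by rewrite Mf -(fineK fin) lee_fin ltW // Hd.
Qed.

Lemma inQ_derivative_equicontinuous (M : R -> R) :
  mu.-integrable `]0, 1[ (EFin \o M) ->
  forall e, 0 < e -> exists2 d, 0 < d & forall u du, inQ M u du -> osc01_le du d e.
Proof.
move=> hM e e0; have [d d0 Hd] := integral_short_itv_le hM e0.
exists d => // u du [_ HQ] s t; rewrite !in_itv /= => /andP[s0 s1] /andP[t0 t1].
rewrite ltr_norml -lee_fin => /andP[? ?].
have [st|ts] := leP s t.
- by apply: le_trans (HQ s t s0 st t1) (Hd s t s0 st t1 _); lra.
- rewrite distrC; apply: le_trans (HQ t s t0 (ltW ts) s1) (Hd t s t0 (ltW ts) s1 _).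
  lra.
Qed.

End C1_on_unit_interval.

Theorem lemma5 (R : realType) (M : R -> R)
  (hM : (@lebesgue_measure R).-integrable `]0, 1[ (EFin \o M))
  (hM0 : {ae @lebesgue_measure R, forall r, r \in `]0, 1[ -> 0 <= M r})
  (u : nat -> R -> R) (du : nat -> R -> R) (v : R -> R)
  (hu : forall n, inQ M (u n) (du n))
  (hcvg : unif_cvg01 u v) :
  exists dv : R -> R,
    inQ M v dv /\
    exists phi : nat -> nat, (forall k, (phi k < phi k.+1)%N) /\
      unif_cvg01 (fun k => u (phi k)) v /\
      unif_cvg01 (fun k => du (phi k)) dv.
Proof.
have u_C1 n : C1on01 (u n) (du n) by case: (hu n).
have du_equi e : 0 < e -> exists2 d, 0 < d & forall n, osc01_le (du n) d e.
  move=> e0; have [d d0 Hd] := inQ_derivative_equicontinuous hM e0.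
  by exists d => // n; apply: Hd.
have [w du_cvg] := unif_cauchy01_cvg (derivative_unif_cauchy u_C1 hcvg du_equi).
exists w; split; last by exists id.
split; first exact: (C1on01_unif_lim u_C1 hcvg du_equi du_cvg).
move=> s t s0 st t1; apply: (unif_cvg01_dist_le du_cvg) => [||n]; last exact: (hu n).2.
  by rewrite in_itv /=; apply/andP; split; lra.
by rewrite in_itv /=; apply/andP; split; lra.
Qed.
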